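(* Let $\mathcal{C}=\langle C_\delta:\delta\in\mathrm{Lim}\rangle$ be a $\clubsuit$-sequence, let $n\geq1$, and let $\mathcal{F}$ be a construction scheme over $\omega_1$ of a good type which satisfies $IH_\rho(\mathcal{C},n)$. Then $\mathcal{F}$ is $(n+1)$-$\rho$-capturing.
   Context: $\mathrm{Lim}$ is the set of nonzero countable limit ordinals. A $\clubsuit$-sequence is $\langle C_\delta:\delta\in\mathrm{Lim}\rangle$ with $C_\delta\subseteq\delta$ of order type $\omega$, $\sup C_\delta=\delta$, and $\{\delta:C_\delta\subseteq S\}$ stationary for every uncountable $S\subseteq\omega_1$. $\mathrm{Lim}_0=\mathrm{Lim}$, $\mathrm{Lim}_{n+1}=\{\delta\in\mathrm{Lim}:C_\delta\subseteq\mathrm{Lim}_n\}$; $C^0_\delta=C_\delta$, $C^{n+1}_\delta=\bigcup_{\xi\in C_\delta}C^n_\xi$ for $\delta\in\mathrm{Lim}_{n+1}$. A type is a sequence $\langle m_k,n_{k+1},r_{k+1}\rangle_{k\in\omega}$ of natural numbers with $m_0=1$ and, for all $k$, $n_{k+1}\geq2$, $m_k>r_{k+1}$, $m_{k+1}=r_{k+1}+(m_k-r_{k+1})n_{k+1}$; good if every $r$ equals $r_k$ for infinitely many $k\geq1$. $A<B$ means every element of $A$ is below every element of $B$; $D(a)$ is the $a$-th element of a finite set of ordinals $D$. A construction scheme of type $\tau$ over a set of ordinals $Y$ is a family $\mathcal{F}$ of nonempty finite subsets of $Y$, cofinal among finite subsets of $Y$ under $\subseteq$, each of size $m_k$ for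 some $k$, with $\mathcal{F}_k=\{F\in\mathcal{F}:|F|=m_k\}$ satisfying: (i) for $E,F\in\mathcal{F}_k$, $E\cap F$ is an initial segment of both; (ii) every $F\in\mathcal{F}_{k+1}$ equals $F_0\cup\dots\cup F_{n_{k+1}-1}$ with $F_i\in\mathcal{F}_k$ a $\Delta$-system with root $R(F)$, $|R(F)|=r_{k+1}$, $R(F)<F_0\setminus R(F)<\dots<F_{n_{k+1}-1}\setminus R(F)$ (the canonical pieces). $\rho(\alpha,\beta)=\min\{k:\exists F\in\mathcal{F}_k\ \{\alpha,\beta\}\subseteq F\}$; $(\alpha)_k=\{\xi\leq\alpha:\rho(\xi,\alpha)\leq k\}$; for $k\geq1$, $\Xi_\alpha(k)=-1$ if $\alpha\in R(F)$ and $=i$ if $\alpha\in F_i\setminus R(F)$, for any $F\in\mathcal{F}_k$ containing $\alpha$. A root-tail-tail $\Delta$-system is a family (or sequence $\langle D_i\rangle_{i<n}$), $n\geq2$, of finite sets of ordinals of common size $m$ with pairwise intersections equal to a root $R$, $R<D_i\setminus R$, and $D_0\setminus R<\dots<D_{n-1}\setminus R$; $r=|R|$. It is $\rho$-captured at level $l\geq1$ if $n\leq n_l$, (I) $\Xi_{D_i(a)}(l)=-1$ for $a<r$ and $=i$ for $a\geq r$ ($i<n$, $a<m$), and (II) $\rho(D_i(a),D_j(a))=l$ for $i<j<n$, $r\leq a<m$. A scheme over $\omega_1$ is $n$-$\rho$-capturing if for every uncountable family $\mathcal{S}$ of nonempty finite subsets of $\omega_1$ there are infinitely many $l$ for which some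 $n$ distinct members of $\mathcal{S}$, suitably enumerated, form a root-tail-tail $\Delta$-system $\rho$-captured at level $l$. A tuple $(n,\delta,k,A)$ is $\mathcal{F}$-good if $n,k\in\omega$, $\delta\in\mathrm{Lim}_n$, the family $\{(\xi)_k:\xi\in C^n_\delta\}$ is a root-tail-tail $\Delta$-system with some root $R^n_k(\delta)$, and $A$ is a nonempty finite subset of $[\delta,\omega_1)$. $\mathcal{F}$ satisfies $IH_\rho(\mathcal{C},n)$ if for every $\mathcal{F}$-good tuple $(n,\delta,k,A)$ there are infinitely many $l\geq k$ with $n_l>n$ for which there exist $F\in\mathcal{F}_l$ (with canonical pieces $F_0,\dots,F_{n_l-1}$ and root $R(F)$) and an $n$-element set $D\subseteq C^n_\delta$ (with $D(i)$ its $i$-th element) such that $A\subseteq F_n\setminus R(F)$ and, for each $i<n$, $(D(i))_k\subseteq F_i$ and $(D(i))_k\cap R(F)=R^n_k(\delta)$. *)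

(* omega_1 is represented abstractly as a type T with a strict
   order lt which is a well-order, uncountable, with all proper initial
   segments countable (this characterizes omega_1 up to isomorphism).
   Finite sets of ordinals are represented by strictly increasing lists
   (the canonical increasing enumeration), so D(a) = nth a D. *)
From Stdlib Require Import List Sorting.Sorted ZArith Arith.
Import ListNotations.

Section Omega1.
Variable T : Type.
Variable lt : T -> T -> Prop.

Definition le (x y : T) : Prop := lt x y \/ x = y.

Definition is_omega1 : Prop :=
  (forall x, ~ lt x x) /\
  (forall x y z, lt x y -> lt y z -> lt x z) /\
  (forall x y, lt x y \/ x = y \/ lt y x) /\
  well_founded lt /\
  (~ exists f : T -> nat, forall x y, f x = f y -> x = y) /\
  (forall a, exists f : T -> nat, forall x y, lt x a -> lt y a -> f x = f y -> x = y).

Definition countable_set (P : T -> Prop) : Prop :=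
  exists f : T -> nat, forall x y, P x -> P y -> f x = f y -> x = y.

Definition countable_fam (S : list T -> Prop) : Prop :=
  exists f : list T -> nat, forall L L', S L -> S L' -> f L = f L' -> L = L'.

Definition finite_set (P : T -> Prop) : Prop :=
  exists L : list T, forall x, P x -> In x L.

Definition is_lim (d : T) : Prop :=
  (exists b, lt b d) /\ (forall b, lt b d -> exists g, lt b g /\ lt g d).

Definition ordtype_omega (P : T -> Prop) : Prop :=
  ~ finite_set P /\ forall y, P y -> finite_set (fun x => P x /\ lt x y).

Definition club (Cl : T -> Prop) : Prop :=
  (forall a, exists b, Cl b /\ le a b) /\
  (forall d, is_lim d -> (forall b, lt b d -> exists g, Cl g /\ lt b g /\ lt g d) -> Cl d).

Definition stationary (S : T -> Prop) : Prop :=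
  forall Cl, club Cl -> exists d, Cl d /\ S d.

(* C : a sequence indexed by ordinals; only its values at limits matter *)
Definition clubsuit (C : T -> T -> Prop) : Prop :=
  (forall d, is_lim d ->
     (forall x, C d x -> lt x d) /\ ordtype_omega (C d) /\
     (forall b, lt b d -> exists g, C d g /\ lt b g)) /\
  (forall S : T -> Prop, ~ countable_set S ->
     stationary (fun d => is_lim d /\ forall x, C d x -> S x)).

Fixpoint LimN (C : T -> T -> Prop) (k : nat) (d : T) : Prop :=
  match k with
  | 0 => is_lim d
  | S k' => is_lim d /\ forall x, C d x -> LimN C k' x
  end.

Fixpoint Cn (C : T -> T -> Prop) (k : nat) (d : T) (x : T) : Prop :=
  match k with
  | 0 => C d x
  | S k' => exists xi, C d xi /\ Cn C k' xi x
  end.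

(* m k = m_k ; ns k = n_k and rs k = r_k (only meaningful for k >= 1) *)
Definition is_type (m ns rs : nat -> nat) : Prop :=
  m 0 = 1 /\
  forall k, 2 <= ns (S k) /\ rs (S k) < m k /\
            m (S k) = rs (S k) + (m k - rs (S k)) * ns (S k).

Definition good_type (m ns rs : nat -> nat) : Prop :=
  is_type m ns rs /\
  forall r N, exists k, N <= k /\ 1 <= k /\ rs k = r.

Definition tail_lt (L L' R : list T) : Prop :=
  forall x y, In x L -> ~ In x R -> In y L' -> ~ In y R -> lt x y.

Definition rtt_seq (n : nat) (D : nat -> list T) (R : list T) : Prop :=
  2 <= n /\ StronglySorted lt R /\
  (forall i, i < n -> StronglySorted lt (D i) /\ length (D i) = length (D 0)) /\
  (forall i j, i < n -> j < n -> i <> j ->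
     forall x, (In x (D i) /\ In x (D j)) <-> In x R) /\
  (forall i, i < n -> forall x y, In x R -> In y (D i) -> ~ In y R -> lt x y) /\
  (forall i j, i < j -> j < n -> tail_lt (D i) (D j) R).

Definition rtt_fam (Fam : list T -> Prop) (R : list T) : Prop :=
  (exists L1 L2, Fam L1 /\ Fam L2 /\ L1 <> L2) /\ StronglySorted lt R /\
  (forall L, Fam L -> StronglySorted lt L) /\
  (forall L L', Fam L -> Fam L' -> length L = length L') /\
  (forall L L', Fam L -> Fam L' -> L <> L' ->
     forall x, (In x L /\ In x L') <-> In x R) /\
  (forall L, Fam L -> forall x y, In x R -> In y L -> ~ In y R -> lt x y) /\
  (forall L L', Fam L -> Fam L' -> L <> L' -> tail_lt L L' R \/ tail_lt L' L R).

Definition rep (L : list T) (P : T -> Prop) : Prop :=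
  StronglySorted lt L /\ forall x, In x L <-> P x.

Variables (m ns rs : nat -> nat) (F : list T -> Prop).

Definition Fk (k : nat) (L : list T) : Prop := F L /\ length L = m k.

Definition inter_init (E G : list T) : Prop :=
  forall x y, In x E -> In y E -> In y G -> lt x y -> In x G.

Definition canon (l : nat) (G R : list T) (P : nat -> list T) : Prop :=
  1 <= l /\ length R = rs l /\
  (forall i, i < ns l -> Fk (l - 1) (P i)) /\
  (forall x, In x G <-> exists i, i < ns l /\ In x (P i)) /\
  rtt_seq (ns l) P R.

Definition scheme : Prop :=
  (forall L, F L -> StronglySorted lt L /\ L <> [] /\ exists k, length L = m k) /\
  (forall A : list T, exists L, F L /\ forall x, In x A -> In x L) /\
  (forall k E G, Fk k E -> Fk k G -> inter_init E G /\ inter_init G E) /\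
  (forall k G, Fk (S k) G -> exists R P, canon (S k) G R P).

Definition rho_eq (a b : T) (k : nat) : Prop :=
  (exists G, Fk k G /\ In a G /\ In b G) /\
  forall j, j < k -> ~ exists G, Fk j G /\ In a G /\ In b G.

Definition clos (a : T) (k : nat) (x : T) : Prop :=
  le x a /\ exists j, j <= k /\ exists G, Fk j G /\ In x G /\ In a G.

Definition Xi_eq (a : T) (l : nat) (v : Z) : Prop :=
  (exists G, Fk l G /\ In a G) /\
  forall G R P, Fk l G -> In a G -> canon l G R P ->
    (In a R /\ v = (-1)%Z) \/
    (exists i, i < ns l /\ In a (P i) /\ ~ In a R /\ v = Z.of_nat i).

Definition captured (n : nat) (D : nat -> list T) (R : list T) (l : nat) : Prop :=
  1 <= l /\ n <= ns l /\
  (forall i a x, i < n -> nth_error (D i) a = Some x ->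
     Xi_eq x l (if Nat.ltb a (length R) then (-1)%Z else Z.of_nat i)) /\
  (forall i j a x y, i < j -> j < n -> length R <= a ->
     nth_error (D i) a = Some x -> nth_error (D j) a = Some y -> rho_eq x y l).

Definition rho_capturing (n : nat) : Prop :=
  forall S : list T -> Prop,
    (forall L, S L -> StronglySorted lt L /\ L <> []) ->
    ~ countable_fam S ->
    forall N, exists l, N <= l /\
      exists (D : nat -> list T) (R : list T),
        (forall i, i < n -> S (D i)) /\
        (forall i j, i < n -> j < n -> i <> j -> D i <> D j) /\
        rtt_seq n D R /\ captured n D R l.

Definition IH_rho (C : T -> T -> Prop) (n : nat) : Prop :=
  forall d k (A R : list T),
    (* (n, d, k, A) is F-good, with root R = R^n_k(d) *)
    LimN C n d ->
    (forall xi, Cn C n d xi -> exists L, rep L (clos xi k)) ->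
    rtt_fam (fun L => exists xi, Cn C n d xi /\ rep L (clos xi k)) R ->
    StronglySorted lt A -> A <> [] -> (forall x, In x A -> ~ lt x d) ->
    forall N, exists l, N <= l /\ k <= l /\ n < ns l /\
      exists G RF (P : nat -> list T) (D : list T),
        Fk l G /\ canon l G RF P /\
        StronglySorted lt D /\ length D = n /\ (forall xi, In xi D -> Cn C n d xi) /\
        (forall x, In x A -> In x (P n) /\ ~ In x RF) /\
        (forall i xi, i < n -> nth_error D i = Some xi ->
           (forall x, clos xi k x -> In x (P i)) /\
           (forall x, (clos xi k x /\ In x RF) <-> In x R)).

End Omega1.

From Stdlib Require Import List Sorting.Sorted ZArith Lia Permutation.
From Stdlib Require Import Classical ClassicalEpsilon FunctionalExtensionality.
From Stdlib Require Cantor.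
Import ListNotations.

(* Two pigeonhole arguments give uncountably many members of the family lying in sets of
   one level k and occupying the same positions (mask) inside the closure (xi)_k of their
   maximum xi. The Delta-system lemma applied to these closures leaves uncountably many
   maxima, the tops, whose closures share a root R and are pairwise separated above it.
   The clubsuit sequence guesses the set of tops: some delta in Lim_n has C^n_delta made of
   tops, so (n, delta, k, A) is F-good with root R, where A is the tail above R of the
   closure of a top beta lying far above delta. IH_rho(C, n) then gives F in F_l placing n
   of these closures in the pieces F_0, ..., F_(n-1) and A in F_n. The masked members
   attached to these n + 1 tops are a root-tail-tail Delta-system captured at level l,
   because the number of elements of a member of F_l below x does not depend on the
   member, and it determines whether x lies in the root or in which canonical piece. *)

Definition countable {X : Type} (P : X -> Prop) : Prop :=
  exists f : X -> nat, forall x y, P x -> P y -> f x = f y -> x = y.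

Lemma countable_sub {X} (P Q : X -> Prop) :
  (forall x, Q x -> P x) -> countable P -> countable Q.
Proof. intros H [f Hf]. exists f. intros x y Hx Hy. apply Hf; auto. Qed.

Lemma uncountable_inhabited {X} (P : X -> Prop) : ~ countable P -> exists x, P x.
Proof.
  intros H. apply NNPP. intros Hn. apply H. exists (fun _ => 0).
  intros x y Hx. exfalso. eauto.
Qed.

Lemma countable_singleton {X} (a : X) (P : X -> Prop) :
  (forall x, P x -> x = a) -> countable P.
Proof. intros H. exists (fun _ => 0). intros x y Hx Hy _. rewrite (H x Hx), (H y Hy). auto. Qed.

Lemma countable_image {X Y} (P : X -> Prop) (g : X -> Y) :
  countable P -> countable (fun y => exists x, P x /\ y = g x).
Proof.
  intros [f Hf]. destruct (classic (inhabited X)) as [HX|HX].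
  - exists (fun y => f (epsilon HX (fun x => P x /\ y = g x))).
    intros y y' Hy Hy' E.
    destruct (epsilon_spec HX (fun x => P x /\ y = g x) Hy) as [A1 A2].
    destruct (epsilon_spec HX (fun x => P x /\ y' = g x) Hy') as [B1 B2].
    rewrite A2, B2. f_equal. apply Hf; auto.
  - exists (fun _ => 0). intros y y' [x _]. exfalso. exact (HX (inhabits x)).
Qed.

Lemma uncountable_image {X Y} (P : X -> Prop) (g : X -> Y) : ~ countable P ->
  (forall x y, P x -> P y -> g x = g y -> x = y) ->
  ~ countable (fun y => exists x, P x /\ y = g x).
Proof.
  intros H Hg [f Hf]. apply H. exists (fun x => f (g x)).
  intros x y Hx Hy E. apply Hg; auto. apply Hf; eauto.
Qed.

Lemma uncountable_fiber {X} (P : X -> Prop) (g : X -> nat) :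
  ~ countable P -> exists c, ~ countable (fun x => P x /\ g x = c).
Proof.
  intros H. apply NNPP. intros Hn.
  assert (Hc : forall c, countable (fun x => P x /\ g x = c)).
  { intros c. apply NNPP. intros Hc. apply Hn. eauto. }
  apply H.
  set (f := fun c => proj1_sig (constructive_indefinite_description _ (Hc c))).
  assert (Hf : forall c x y, P x /\ g x = c -> P y /\ g y = c -> f c x = f c y -> x = y).
  { intros c. unfold f. destruct (constructive_indefinite_description _ (Hc c)) as [h Hh]. exact Hh. }
  exists (fun x => Cantor.to_nat (g x, f (g x) x)).
  intros x y Hx Hy E. apply Cantor.to_nat_inj in E. injection E as E1 E2.
  rewrite <- E1 in E2. apply (Hf (g x)); auto.
Qed.

Lemma in_skipn {A} (l : list A) k x : In x (skipn k l) -> In x l.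
Proof. intros H. rewrite <- (firstn_skipn k l). apply in_or_app; auto. Qed.

Lemma last_In {A} (l : list A) d : l <> [] -> In (last l d) l.
Proof.
  induction l as [|a l IH]; intros H; [congruence|].
  destruct l as [|b l]; [now left|]. right. apply IH. discriminate.
Qed.

Lemma firstn_S_nth {A} (L : list A) j d : j < length L -> firstn (S j) L = firstn j L ++ [nth j L d].
Proof.
  revert j. induction L as [|b l IH]; intros j Hj; simpl in *; [lia|].
  destruct j; simpl; auto. rewrite <- IH by lia. auto.
Qed.

Fixpoint bits_to_nat (l : list bool) : nat :=
  match l with [] => 0 | b :: l' => S (2 * bits_to_nat l' + (if b then 1 else 0)) end.

Lemma bits_to_nat_inj l l' : bits_to_nat l = bits_to_nat l' -> l = l'.
Proof.
  revert l'. induction l as [|b l IH]; intros [|b' l'] E; simpl in *; try lia; auto.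
  assert (b = b' /\ bits_to_nat l = bits_to_nat l') as [-> E2] by (destruct b, b'; split; auto; lia).
  f_equal. auto.
Qed.

Fixpoint select {A} (mu : list bool) (L : list A) : list A :=
  match mu, L with
  | b :: mu', x :: L' => if b then x :: select mu' L' else select mu' L'
  | _, _ => []
  end.

Lemma select_map_filter {A} (f : A -> bool) L : select (map f L) L = filter f L.
Proof. induction L as [|a l IH]; simpl; auto. destruct (f a); rewrite IH; auto. Qed.

Lemma select_incl {A} mu (L : list A) x : In x (select mu L) -> In x L.
Proof.
  revert L. induction mu as [|b mu IH]; intros [|a L] H; simpl in *; try tauto.
  destruct b; [destruct H|]; eauto.
Qed.

Lemma select_app {A} mu1 mu2 (L1 L2 : list A) : length mu1 = length L1 ->
  select (mu1 ++ mu2) (L1 ++ L2) = select mu1 L1 ++ select mu2 L2.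
Proof.
  revert L1. induction mu1 as [|b mu IH]; intros [|a L] H; simpl in *; try lia; auto.
  rewrite IH by lia. destruct b; auto.
Qed.

Lemma select_length {A} mu (L : list A) : length mu = length L ->
  length (select mu L) = length (filter (fun b : bool => b) mu).
Proof.
  revert L. induction mu as [|b mu IH]; intros [|a L] H; simpl in *; try lia; auto.
  destruct b; simpl; auto.
Qed.

Definition decide (P : Prop) : bool := if excluded_middle_informative P then true else false.

Lemma decide_true P : decide P = true <-> P.
Proof. unfold decide. destruct (excluded_middle_informative P); split; auto; discriminate. Qed.

Section Omega1.
Variables (T : Type) (lt : T -> T -> Prop).
Hypothesis HT : is_omega1 T lt.

Lemma ord_lt_irrefl x : ~ lt x x.
Proof. apply HT. Qed.
Lemma ord_lt_trans x y z : lt x y -> lt y z -> lt x z.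
Proof. apply HT. Qed.
Lemma ord_lt_total x y : lt x y \/ x = y \/ lt y x.
Proof. apply HT. Qed.
Lemma ord_wf : well_founded lt.
Proof. apply HT. Qed.
Lemma ord_segment_countable a : countable (fun x => lt x a).
Proof. apply HT. Qed.

Lemma ord_lt_asym x y : lt x y -> ~ lt y x.
Proof. intros H1 H2. apply (ord_lt_irrefl x). eapply ord_lt_trans; eauto. Qed.
Lemma ord_le_refl x : le T lt x x.
Proof. now right. Qed.
Lemma ord_le_lt_trans x y z : le T lt x y -> lt y z -> lt x z.
Proof. intros [H| ->] H'; eauto using ord_lt_trans. Qed.
Lemma ord_lt_le_trans x y z : lt x y -> le T lt y z -> lt x z.
Proof. intros H [H'| <-]; eauto using ord_lt_trans. Qed.
Lemma ord_not_lt_le x y : ~ lt x y -> le T lt y x.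
Proof.
  intros H. destruct (ord_lt_total x y) as [h|[->|h]]; [tauto|apply ord_le_refl|now left].
Qed.
Lemma ord_le_not_lt x y : le T lt x y -> ~ lt y x.
Proof. intros [H| ->] H'. exact (ord_lt_asym _ _ H H'). exact (ord_lt_irrefl _ H'). Qed.
Lemma ord_le_antisym x y : le T lt x y -> le T lt y x -> x = y.
Proof. intros [H|H] H'; auto. exfalso. exact (ord_le_not_lt _ _ H' H). Qed.

Lemma ord_le_countable a : countable (fun x => le T lt x a).
Proof.
  destruct (ord_segment_countable a) as [f Hf].
  exists (fun x => if excluded_middle_informative (x = a) then 0 else S (f x)).
  intros x y [Hx|Hx] [Hy|Hy] E;
    destruct (excluded_middle_informative (x = a)); destruct (excluded_middle_informative (y = a));
    subst; try congruence; injection E; apply Hf; auto.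
Qed.

(* A countable subset of omega_1 is bounded: otherwise omega_1 would be a countable
   union of countable initial segments. *)
Lemma countable_bounded (P : T -> Prop) : countable P -> exists b, forall x, P x -> le T lt x b.
Proof.
  intros [f Hf]. apply NNPP. intros Hn.
  assert (Hp : forall b, exists x, P x /\ lt b x).
  { intros b. apply NNPP. intros Hb. apply Hn. exists b. intros x Px.
    apply ord_not_lt_le. intros h. apply Hb. eauto. }
  set (pick := fun b => proj1_sig (constructive_indefinite_description _ (Hp b))).
  assert (Hpick : forall b, P (pick b) /\ lt b (pick b)).
  { intros b. unfold pick. destruct (constructive_indefinite_description _ (Hp b)). auto. }
  set (h := fun a => proj1_sig (constructive_indefinite_description _ (ord_segment_countable a))).
  assert (Hh : forall a x y, lt x a -> lt y a -> h a x = h a y -> x = y).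
  { intros a. unfold h. destruct (constructive_indefinite_description _ _) as [g Hg]. exact Hg. }
  apply (proj1 (proj2 (proj2 (proj2 (proj2 HT))))).
  exists (fun y => Cantor.to_nat (f (pick y), h (pick y) y)).
  intros x y E. apply Cantor.to_nat_inj in E. injection E as E1 E2.
  assert (Ep : pick x = pick y) by (apply Hf; auto; apply Hpick).
  rewrite Ep in E2. apply (Hh (pick y)); [rewrite <- Ep|..]; apply Hpick || auto.
Qed.

Lemma uncountable_unbounded (P : T -> Prop) : ~ countable P -> forall b, exists x, P x /\ lt b x.
Proof.
  intros H b. apply NNPP. intros Hn. apply H.
  apply (countable_sub (fun x => le T lt x b)); [|apply ord_le_countable].
  intros x Px. apply ord_not_lt_le. intros h. apply Hn. eauto.
Qed.

Lemma ord_unbounded b : exists y, lt b y.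
Proof.
  destruct (uncountable_unbounded (fun _ => True)) with (b := b) as [y [_ Hy]]; eauto.
  intros [f Hf]. apply (proj1 (proj2 (proj2 (proj2 (proj2 HT))))).
  exists f. intros; apply Hf; auto.
Qed.

Lemma stationary_uncountable S : stationary T lt S -> ~ countable S.
Proof.
  intros Hs Hc. destruct (countable_bounded S Hc) as [b Hb].
  destruct (Hs (fun x => lt b x)) as [d [Hd Sd]].
  - split.
    + intros a. destruct (ord_unbounded b) as [y Hy].
      destruct (ord_lt_total a y) as [h|[->|h]].
      * exists y. split; [exact Hy|now left].
      * exists y. split; [exact Hy|apply ord_le_refl].
      * exists a. split; [eauto using ord_lt_trans|apply ord_le_refl].
    + intros d [[b0 Hb0] _] Hcof. destruct (Hcof b0 Hb0) as [g [Hg1 [_ Hg3]]].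
      eauto using ord_lt_trans.
  - exact (ord_le_not_lt _ _ (Hb d Sd) Hd).
Qed.

Lemma StronglySorted_app_inv (l1 l2 : list T) : StronglySorted lt (l1 ++ l2) ->
  StronglySorted lt l1 /\ StronglySorted lt l2 /\ (forall x y, In x l1 -> In y l2 -> lt x y).
Proof.
  induction l1 as [|a l1 IH]; simpl; intros H.
  - repeat split; auto using SSorted_nil. tauto.
  - apply StronglySorted_inv in H as [H1 H2]. destruct (IH H1) as [A [B D]].
    rewrite Forall_forall in H2. repeat split; auto.
    + constructor; auto. rewrite Forall_forall. intros x Hx. apply H2, in_or_app; auto.
    + intros x y [<-|Hx] Hy; auto. apply H2, in_or_app; auto.
Qed.

Lemma StronglySorted_NoDup (L : list T) : StronglySorted lt L -> NoDup L.
Proof.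
  induction 1 as [|a l _ IH Ha]; constructor; auto.
  rewrite Forall_forall in Ha. intros h. exact (ord_lt_irrefl a (Ha a h)).
Qed.

Lemma StronglySorted_filter f (L : list T) : StronglySorted lt L -> StronglySorted lt (filter f L).
Proof.
  induction 1 as [|a l _ IH Ha]; simpl; auto using SSorted_nil.
  destruct (f a); auto. constructor; auto. rewrite Forall_forall in *.
  intros x Hx. apply filter_In in Hx. apply Ha. tauto.
Qed.

Lemma StronglySorted_ext (L L' : list T) : StronglySorted lt L -> StronglySorted lt L' ->
  (forall x, In x L <-> In x L') -> L = L'.
Proof.
  intros H. revert L'. induction H as [|a l Hl IH Ha]; intros L' H' E.
  - destruct L' as [|b l']; auto. exfalso. apply (E b). now left.
  - destruct H' as [|b l' Hl' Hb]. exfalso. apply (E a). now left.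
    rewrite Forall_forall in Ha, Hb.
    assert (ab : a = b).
    { destruct (proj1 (E a) (or_introl eq_refl)) as [h|h]; auto.
      destruct (proj2 (E b) (or_introl eq_refl)) as [h'|h']; auto.
      exfalso. exact (ord_lt_asym a b (Ha b h') (Hb a h)). }
    subst b. f_equal. apply IH; auto. intros x. split; intros Hx.
    + destruct (proj1 (E x) (or_intror Hx)) as [<-|h]; auto. destruct (ord_lt_irrefl a (Ha a Hx)).
    + destruct (proj2 (E x) (or_intror Hx)) as [<-|h]; auto. destruct (ord_lt_irrefl a (Hb a Hx)).
Qed.

Lemma rep_unique L L' P : rep T lt L P -> rep T lt L' P -> L = L'.
Proof.
  intros [H1 H2] [H1' H2']. apply StronglySorted_ext; auto. intros x. rewrite H2, H2'. tauto.
Qed.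

Lemma StronglySorted_le_last d (L : list T) x : StronglySorted lt L -> In x L -> le T lt x (last L d).
Proof.
  intros H. revert x. induction H as [|a l Hl IH Ha]; intros x Hx; [destruct Hx|].
  rewrite Forall_forall in Ha. destruct l as [|b l].
  - destruct Hx as [<-|[]]. apply ord_le_refl.
  - change (last (a :: b :: l) d) with (last (b :: l) d).
    destruct Hx as [<-|Hx]; auto.
    left. apply (ord_lt_le_trans _ b); [apply Ha; now left|apply IH; now left].
Qed.

Lemma StronglySorted_nth_le_skipn d (L : list T) a y : StronglySorted lt L -> a < length L ->
  In y (skipn a L) -> le T lt (nth a L d) y.
Proof.
  intros H. revert a. induction H as [|b l Hl IH Hb]; intros a Ha Hy; simpl in *; [lia|].
  rewrite Forall_forall in Hb. destruct a as [|a].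
  - destruct Hy as [<-|Hy]; [apply ord_le_refl|now left; apply Hb].
  - apply IH; auto. lia.
Qed.

Section Clubsuit.
Variable C : T -> T -> Prop.
Hypothesis HC : clubsuit T lt C.

(* Stage [n+1] is the clubsuit guessing property applied to the set of stage [n]. *)
Lemma LimN_Cn_sub_uncountable n (X : T -> Prop) : ~ countable X ->
  ~ countable (fun d => LimN T lt C n d /\ forall xi, Cn T C n d xi -> X xi).
Proof.
  destruct HC as [_ HS].
  induction n as [|n IH]; intros HX Hc.
  - apply (stationary_uncountable _ (HS X HX)).
    refine (countable_sub _ _ _ Hc). intros d [A B]. split; auto.
  - apply (stationary_uncountable _ (HS _ (IH HX))).
    refine (countable_sub _ _ _ Hc). intros d [A B]. split; [split; auto|].
    + intros x Hx. apply B; auto.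
    + intros xi [x [Hx Hxi]]. apply (B x Hx); auto.
Qed.

Lemma Cn_lt n d x : LimN T lt C n d -> Cn T C n d x -> lt x d.
Proof.
  destruct HC as [HC1 _].
  revert d x. induction n as [|n IH]; intros d x Hd Hx; simpl in *.
  - apply (HC1 d Hd). auto.
  - destruct Hd as [Hd1 Hd2]. destruct Hx as [xi [Hxi Hx]].
    apply (ord_lt_trans _ xi); [apply IH; auto|apply (HC1 d Hd1); auto].
Qed.

Lemma Cn_two_lt n d : LimN T lt C n d -> exists x y, Cn T C n d x /\ Cn T C n d y /\ lt x y.
Proof.
  destruct HC as [HC1 _].
  revert d. induction n as [|n IH]; intros d Hd; simpl in *.
  - destruct (HC1 d Hd) as [A [_ B]]. destruct Hd as [[b Hb] _].
    destruct (B b Hb) as [g1 [Hg1 _]]. destruct (B g1 (A g1 Hg1)) as [g2 [Hg2 H12]].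
    exists g1, g2. auto.
  - destruct Hd as [Hd1 Hd2]. destruct (HC1 d Hd1) as [_ [_ B]]. destruct Hd1 as [[b Hb] _].
    destruct (B b Hb) as [xi [Hxi _]]. destruct (IH xi (Hd2 xi Hxi)) as [x [y [Hx [Hy Hxy]]]].
    exists x, y. split; [|split]; eauto.
Qed.

End Clubsuit.

Section DeltaSystem.
Variable d0 : T.
Variable Fam : list T -> Prop.
Variable m0 : nat.
Hypothesis HFam : forall L, Fam L -> StronglySorted lt L /\ length L = m0.

(* Pressing down: while the [j]-th coordinates of an uncountable subfamily with common
   prefix [R] are bounded, uncountably many share the same [j]-th coordinate. *)
Lemma delta_root_unbounded j R (Famj : list T -> Prop) : j <= m0 -> length R = j ->
  (forall L, Famj L -> Fam L) -> ~ countable Famj -> (forall L, Famj L -> firstn j L = R) ->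
  exists a0 R' Fam1, a0 < m0 /\ length R' = a0 /\ (forall L, Fam1 L -> Fam L) /\
    ~ countable Fam1 /\ (forall L, Fam1 L -> firstn a0 L = R') /\
    (forall b, exists L, Fam1 L /\ lt b (nth a0 L d0)).
Proof.
  remember (m0 - j) as k eqn:Ek. revert j R Famj Ek.
  induction k as [|k IH]; intros j R Famj Ek Hj HR Hsub Hunc Hpre.
  - exfalso. apply Hunc. apply (countable_singleton R). intros L HL. rewrite <- (Hpre L HL).
    symmetry. apply firstn_all2. rewrite (proj2 (HFam L (Hsub L HL))). lia.
  - destruct (classic (forall b, exists L, Famj L /\ lt b (nth j L d0))) as [Hub|Hb].
    { exists j, R, Famj. repeat split; auto. lia. }
    assert (Hbd : exists b, forall L, Famj L -> le T lt (nth j L d0) b).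
    { apply NNPP. intros Hn. apply Hb. intros b. apply NNPP. intros Hn2. apply Hn. exists b.
      intros L HL. apply ord_not_lt_le. intros h. apply Hn2. eauto. }
    destruct Hbd as [b Hbb]. destruct (ord_le_countable b) as [h Hh].
    destruct (uncountable_fiber Famj (fun L => h (nth j L d0)) Hunc) as [c Hc].
    destruct (uncountable_inhabited _ Hc) as [L1 [HL1 HL1c]].
    assert (Hv : forall L, Famj L /\ h (nth j L d0) = c -> nth j L d0 = nth j L1 d0).
    { intros L [HL HLc]. apply Hh; auto. congruence. }
    apply (IH (S j) (R ++ [nth j L1 d0]) (fun L => Famj L /\ h (nth j L d0) = c)); auto.
    + lia.
    + lia.
    + rewrite length_app; simpl; lia.
    + intros L [HL _]. auto.
    + intros L HL. rewrite (firstn_S_nth L j d0), (Hpre L (proj1 HL)), (Hv L HL); auto.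
      rewrite (proj2 (HFam L (Hsub L (proj1 HL)))). lia.
Qed.

Section Separation.
Variable Fam1 : list T -> Prop.
Variable a0 : nat.
Hypothesis Hunb : forall b, exists L, Fam1 L /\ lt b (nth a0 L d0).
Hypothesis Hsorted : forall L, Fam1 L -> StronglySorted lt L.

Definition coordinate v := exists L, Fam1 L /\ nth a0 L d0 = v.
Definition witness v := epsilon (inhabits []) (fun L => Fam1 L /\ nth a0 L d0 = v).

Lemma witness_spec v : coordinate v -> Fam1 (witness v) /\ nth a0 (witness v) d0 = v.
Proof. apply (epsilon_spec (inhabits []) (fun L => Fam1 L /\ nth a0 L d0 = v)). Qed.

(* Greedy transfinite choice of pairwise separated witnesses. *)
Definition selected : T -> Prop :=
  Fix ord_wf (fun _ => Prop)
    (fun v rec => coordinate v /\ forall u (h : lt u v), rec u h -> lt (last (witness u) d0) v).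

Lemma selected_eq v :
  selected v <-> coordinate v /\ forall u, lt u v -> selected u -> lt (last (witness u) d0) v.
Proof.
  unfold selected at 1. rewrite Fix_eq; [reflexivity|].
  intros x f g Hfg. replace g with f; [reflexivity|].
  apply functional_extensionality_dep. intros y. apply functional_extensionality_dep. auto.
Qed.

(* Were the selected coordinates bounded by [b], the countably many witnesses would end
   below some [c]; any coordinate above [b] and [c] would then be selected. *)
Lemma selected_unbounded b : exists v, selected v /\ lt b v.
Proof.
  apply NNPP. intros Hn.
  assert (Hle : forall v, selected v -> le T lt v b).
  { intros v Hv. apply ord_not_lt_le. intros h. apply Hn. eauto. }
  assert (Hc : countable selected) by exact (countable_sub _ _ Hle (ord_le_countable b)).
  destruct (countable_bounded _ (countable_image selected (fun u => last (witness u) d0) Hc))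
    as [c Hcb].
  destruct (ord_unbounded b) as [e0 He0]. destruct (ord_unbounded c) as [e1 He1].
  assert (He : exists e, lt b e /\ lt c e).
  { destruct (ord_lt_total e0 e1) as [h|[<-|h]]; eauto using ord_lt_trans. }
  destruct He as [e [Hbe Hce]].
  destruct (Hunb e) as [L [HL HLe]].
  assert (Hsel : selected (nth a0 L d0)).
  { apply selected_eq. split; [exists L; auto|].
    intros u _ Hu. apply (ord_le_lt_trans _ c); [apply Hcb; eauto|eauto using ord_lt_trans]. }
  exact (ord_le_not_lt _ _ (Hle _ Hsel) (ord_lt_trans _ _ _ Hbe HLe)).
Qed.

Definition separated_family L := exists v, selected v /\ L = witness v.

Lemma separated_family_sub L : separated_family L -> Fam1 L.
Proof. intros [v [Hv ->]]. apply selected_eq in Hv. apply witness_spec. tauto. Qed.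

Lemma separated_family_uncountable : ~ countable separated_family.
Proof.
  apply uncountable_image.
  - intros Hc. destruct (countable_bounded _ Hc) as [b Hb].
    destruct (selected_unbounded b) as [v [Hv Hbv]]. exact (ord_le_not_lt _ _ (Hb v Hv) Hbv).
  - intros u v Hu Hv E. apply selected_eq in Hu. apply selected_eq in Hv.
    rewrite <- (proj2 (witness_spec u (proj1 Hu))), <- (proj2 (witness_spec v (proj1 Hv))).
    congruence.
Qed.

Lemma separated_family_sep L L' : separated_family L -> separated_family L' -> L <> L' ->
  (forall x, In x L -> lt x (nth a0 L' d0)) \/ (forall x, In x L' -> lt x (nth a0 L d0)).
Proof.
  intros [u [Hu ->]] [v [Hv ->]] Hne.
  pose proof Hu as Hu'. pose proof Hv as Hv'. apply selected_eq in Hu', Hv'.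
  destruct (witness_spec u (proj1 Hu')) as [Mu1 Mu2].
  destruct (witness_spec v (proj1 Hv')) as [Mv1 Mv2].
  destruct (ord_lt_total u v) as [h|[<-|h]]; [left| tauto |right]; intros x Hx.
  - rewrite Mv2. apply (ord_le_lt_trans _ (last (witness u) d0)).
    + apply StronglySorted_le_last; auto.
    + apply (proj2 Hv'); auto.
  - rewrite Mu2. apply (ord_le_lt_trans _ (last (witness v) d0)).
    + apply StronglySorted_le_last; auto.
    + apply (proj2 Hu'); auto.
Qed.

End Separation.

Lemma delta_system : ~ countable Fam ->
  exists a0 R Fam2, a0 < m0 /\ length R = a0 /\ (forall L, Fam2 L -> Fam L) /\
    ~ countable Fam2 /\ (forall L, Fam2 L -> firstn a0 L = R) /\
    (forall L L', Fam2 L -> Fam2 L' -> L <> L' ->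
       (forall x, In x L -> lt x (nth a0 L' d0)) \/ (forall x, In x L' -> lt x (nth a0 L d0))).
Proof.
  intros Hunc.
  destruct (delta_root_unbounded 0 [] Fam) as [a0 [R [Fam1 [H1 [H2 [H3 [H4 [H5 H6]]]]]]]];
    auto; try lia.
  assert (Hs : forall L, Fam1 L -> StronglySorted lt L) by (intros; apply HFam, H3; auto).
  exists a0, R, (separated_family Fam1 a0). repeat split; auto.
  - intros L HL. apply H3, (separated_family_sub Fam1 a0 L HL).
  - apply separated_family_uncountable; auto.
  - intros L HL. apply H5, (separated_family_sub Fam1 a0 L HL).
  - intros L L' HL HL' Hne. apply (separated_family_sep Fam1 a0); auto.
Qed.

End DeltaSystem.

Section RootTailTail.
Variables (n : nat) (D : nat -> list T) (R : list T).
Hypothesis HD : rtt_seq T lt n D R.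

Lemma rtt_inter i j x : i < n -> j < n -> i <> j -> In x (D i) -> In x (D j) -> In x R.
Proof. destruct HD as [_ [_ [_ [H _]]]]. intros. apply (H i j); auto. Qed.
Lemma rtt_root_lt i x y : i < n -> In x R -> In y (D i) -> ~ In y R -> lt x y.
Proof. destruct HD as [_ [_ [_ [_ [H _]]]]]. eauto. Qed.
Lemma rtt_tails_lt i j x y : i < j -> j < n ->
  In x (D i) -> ~ In x R -> In y (D j) -> ~ In y R -> lt x y.
Proof. destruct HD as [_ [_ [_ [_ [_ H]]]]]. intros. eapply (H i j); eauto. Qed.
Lemma rtt_root_sub i x : i < n -> In x R -> In x (D i).
Proof.
  intros Hi Hx. destruct HD as [H2 [_ [_ [Hint _]]]].
  destruct (Nat.eq_dec i 0) as [->|ne];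
    [apply (Hint 0 1) | apply (Hint i 0)]; auto; lia.
Qed.

End RootTailTail.

Section Scheme.
Variables (m ns rs : nat -> nat) (F : list T -> Prop).
Hypothesis Htype : is_type m ns rs.
Hypothesis HF : scheme T lt m ns rs F.

Local Notation Fk := (Fk T m F).
Local Notation canon := (canon T lt m ns rs F).
Local Notation clos := (clos T lt m F).

Lemma Fk_sorted k L : Fk k L -> StronglySorted lt L.
Proof. intros [h _]. apply HF, h. Qed.

Lemma Fk_inter_init j K E G : j <= K -> Fk j E -> Fk K G -> inter_init T lt E G.
Proof.
  intros HjK. revert G. induction HjK as [|K HjK IH]; intros G HE HG.
  - apply HF with (k := j); auto.
  - destruct (proj2 (proj2 (proj2 HF)) K G HG) as [R [P [_ [_ [HP [HGP _]]]]]].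
    intros x y Hx Hy HyG Hxy. apply HGP in HyG as [i [Hi Hyi]]. apply HGP. exists i. split; auto.
    assert (HPi := HP i Hi). replace (S K - 1) with K in HPi by lia.
    apply (IH (P i) HE HPi x y); auto.
Qed.

Lemma clos_Fk k G a x : Fk k G -> In a G -> clos a k x <-> le T lt x a /\ In x G.
Proof.
  intros HG Ha. split.
  - intros [Hle [j [Hj [E [HE [Hx HaE]]]]]]. split; auto.
    destruct Hle as [Hlt| ->]; auto. apply (Fk_inter_init j k E G Hj HE HG x a); auto.
  - intros [Hle Hx]. split; auto. exists k. split; auto. exists G. auto.
Qed.

Definition in_level k a := exists G, Fk k G /\ In a G.

(* The increasing enumeration of [(a)_k]; a junk value unless [in_level k a]. *)
Definition closure_list k a : list T :=
  epsilon (inhabits []) (fun L => rep T lt L (clos a k)).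

Lemma closure_list_rep k a : in_level k a -> rep T lt (closure_list k a) (clos a k).
Proof.
  intros [G [HG Ha]]. apply (epsilon_spec (inhabits []) (fun L => rep T lt L (clos a k))).
  exists (filter (fun x => decide (le T lt x a)) G). split.
  - apply StronglySorted_filter, (Fk_sorted k), HG.
  - intros x. rewrite filter_In, decide_true, (clos_Fk k G a x HG Ha). tauto.
Qed.

Lemma closure_list_le k a x : in_level k a -> In x (closure_list k a) -> le T lt x a.
Proof. intros Ha Hx. apply (closure_list_rep k a Ha), Hx. Qed.

Lemma closure_list_self k a : in_level k a -> In a (closure_list k a).
Proof.
  intros Ha. apply (closure_list_rep k a Ha). destruct Ha as [G [HG Ha]].
  apply (clos_Fk k G a a HG Ha). split; auto. apply ord_le_refl.
Qed.

Lemma closure_list_inj k a b : in_level k a -> in_level k b ->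
  closure_list k a = closure_list k b -> a = b.
Proof.
  intros Ha Hb E. apply ord_le_antisym.
  - apply (closure_list_le k b a Hb). rewrite <- E. apply closure_list_self, Ha.
  - apply (closure_list_le k a b Ha). rewrite E. apply closure_list_self, Hb.
Qed.

Definition rank (G : list T) (x : T) : nat := length (filter (fun y => decide (le T lt y x)) G).

Section Canonical.
Variables (l : nat) (G R : list T) (P : nat -> list T).
Hypothesis HG : Fk l G.
Hypothesis HC : canon l G R P.

Lemma canon_piece_Fk i : i < ns l -> Fk (l - 1) (P i).
Proof. apply HC. Qed.
Lemma canon_In x : In x G <-> exists i, i < ns l /\ In x (P i).
Proof. apply HC. Qed.
Lemma canon_rtt : rtt_seq T lt (ns l) P R.
Proof. apply HC. Qed.
Lemma canon_two : 2 <= ns l.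
Proof. apply canon_rtt. Qed.
Lemma canon_root_sorted : StronglySorted lt R.
Proof. apply canon_rtt. Qed.
Lemma canon_inter i j x : i < ns l -> j < ns l -> i <> j -> In x (P i) -> In x (P j) -> In x R.
Proof. intros. apply (rtt_inter _ _ _ canon_rtt i j); auto. Qed.
Lemma canon_root_lt i x y : i < ns l -> In x R -> In y (P i) -> ~ In y R -> lt x y.
Proof. apply rtt_root_lt, canon_rtt. Qed.
Lemma canon_tails_lt i j x y : i < j -> j < ns l ->
  In x (P i) -> ~ In x R -> In y (P j) -> ~ In y R -> lt x y.
Proof. apply rtt_tails_lt, canon_rtt. Qed.
Lemma canon_root_piece i x : i < ns l -> In x R -> In x (P i).
Proof. apply rtt_root_sub, canon_rtt. Qed.

Lemma canon_piece_in i x : i < ns l -> In x (P i) -> In x G.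
Proof. intros. apply canon_In. eauto. Qed.

Lemma canon_root_in x : In x R -> In x G.
Proof. intros. pose proof canon_two. apply (canon_piece_in 0); [lia|]. apply canon_root_piece; auto; lia. Qed.

Lemma rho_eq_tails i j x y : i < j -> j < ns l -> In x (P i) -> ~ In x R -> In y (P j) -> ~ In y R ->
  rho_eq T m F x y l.
Proof.
  intros Hij Hj Hx Hx' Hy Hy'. split.
  - exists G. split; auto. split; [apply (canon_piece_in i); auto; lia | apply (canon_piece_in j); auto].
  - intros j' Hj' [E [HE [HxE HyE]]]. apply Hx'. apply (canon_inter i j x); auto; try lia.
    apply (Fk_inter_init j' (l - 1) E (P j) ltac:(lia) HE (canon_piece_Fk j Hj) x y); auto.
    apply (canon_tails_lt i j x y); auto.
Qed.

Definition piece_tail j := filter (fun y => negb (decide (In y R))) (P j).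

Fixpoint pieces_below i := match i with 0 => R | S i' => pieces_below i' ++ piece_tail i' end.

Lemma piece_tail_In j y : In y (piece_tail j) <-> In y (P j) /\ ~ In y R.
Proof.
  unfold piece_tail. rewrite filter_In.
  destruct (decide (In y R)) eqn:E; simpl.
  - apply (decide_true (In y R)) in E. split; intros [_ H]; [discriminate|tauto].
  - assert (~ In y R) by (rewrite <- (decide_true (In y R)), E; discriminate). tauto.
Qed.

Lemma piece_tail_length j : j < ns l -> length (piece_tail j) = m (l - 1) - rs l.
Proof.
  intros Hj. destruct (canon_piece_Fk j Hj) as [HPj HPl].
  assert (Pm : Permutation (P j) (R ++ piece_tail j)).
  { apply NoDup_Permutation.
    - apply StronglySorted_NoDup, HF, HPj.
    - apply NoDup_app.
      + apply StronglySorted_NoDup, canon_root_sorted.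
      + apply NoDup_filter, StronglySorted_NoDup, HF, HPj.
      + intros a Ha Ht. apply piece_tail_In in Ht. tauto.
    - intros y. rewrite in_app_iff, piece_tail_In. split.
      + intros h. destruct (classic (In y R)); tauto.
      + intros [h|h]; [apply canon_root_piece|]; tauto. }
  apply Permutation_length in Pm. rewrite length_app in Pm.
  replace (length R) with (rs l) in Pm by (symmetry; apply HC). lia.
Qed.

Lemma pieces_below_spec i : i <= ns l ->
  NoDup (pieces_below i) /\ length (pieces_below i) = rs l + i * (m (l - 1) - rs l) /\
  (forall y, In y (pieces_below i) <-> In y R \/ exists j, j < i /\ In y (P j) /\ ~ In y R).
Proof.
  induction i as [|i IH]; intros Hi; simpl.
  - split; [apply StronglySorted_NoDup, canon_root_sorted|]. split; [rewrite (proj1 (proj2 HC)); lia|].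
    intros y. split; [tauto|]. intros [h|[j [Hj _]]]; [auto|lia].
  - destruct (IH ltac:(lia)) as [A [B D]]. split; [|split].
    + apply NoDup_app; auto.
      * apply NoDup_filter, StronglySorted_NoDup, (Fk_sorted (l - 1)), canon_piece_Fk. lia.
      * intros a Ha Ht. apply piece_tail_In in Ht. apply D in Ha as [Ha|[j [Hj [Ha1 Ha2]]]]; [tauto|].
        apply Ha2, (canon_inter j i a); auto; try lia; tauto.
    + rewrite length_app, B, piece_tail_length by lia. lia.
    + intros y. rewrite in_app_iff, D, piece_tail_In. split.
      * intros [[h|[j [Hj h]]]|h]; auto; right; [exists j|exists i]; split; auto.
      * intros [h|[j [Hj h]]]; auto. destruct (Nat.eq_dec j i) as [->|]; auto.
        left; right; exists j; split; auto. lia.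
Qed.

Lemma rank_root x : In x R -> rank G x <= rs l.
Proof.
  intros Hx. unfold rank. rewrite <- (proj1 (proj2 HC)). apply NoDup_incl_length.
  - apply NoDup_filter, StronglySorted_NoDup, (Fk_sorted l), HG.
  - intros y Hy. apply filter_In in Hy as [Hy Hle]. rewrite decide_true in Hle.
    apply canon_In in Hy as [i [Hi Hyi]]. apply NNPP. intros Hn.
    exact (ord_le_not_lt _ _ Hle (canon_root_lt i x y Hi Hx Hyi Hn)).
Qed.

Lemma rank_piece i x : i < ns l -> In x (P i) -> ~ In x R ->
  rs l + i * (m (l - 1) - rs l) < rank G x <= rs l + S i * (m (l - 1) - rs l).
Proof.
  intros Hi Hx Hx'. unfold rank. split.
  - destruct (pieces_below_spec i ltac:(lia)) as [A [B D]]. rewrite <- B.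
    apply (@NoDup_incl_length T (x :: pieces_below i)).
    + constructor; auto. intros h. apply D in h as [h|[j [Hj [h1 h2]]]]; auto.
      apply Hx', (canon_inter j i x); auto; lia.
    + intros y Hy. apply filter_In. rewrite decide_true. destruct Hy as [<-|Hy].
      * split; [eapply canon_piece_in; eauto|apply ord_le_refl].
      * apply D in Hy as [Hy|[j [Hj [h1 h2]]]]; split; try left.
        -- apply canon_root_in; auto.
        -- eapply canon_root_lt; eauto.
        -- apply (canon_piece_in j); auto. lia.
        -- eapply (canon_tails_lt j i); eauto.
  - destruct (pieces_below_spec (S i) ltac:(lia)) as [A [B D]]. rewrite <- B.
    apply NoDup_incl_length.
    + apply NoDup_filter, StronglySorted_NoDup, (Fk_sorted l), HG.
    + intros y Hy. apply filter_In in Hy as [Hy Hle]. rewrite decide_true in Hle.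
      apply D. apply canon_In in Hy as [j [Hj Hyj]].
      destruct (classic (In y R)) as [h|h]; auto. right. exists j. split; auto.
      destruct (Nat.lt_ge_cases i j) as [c|c]; [|lia]. exfalso.
      exact (ord_le_not_lt _ _ Hle (canon_tails_lt i j x y c Hj Hx Hx' Hyj h)).
Qed.

End Canonical.

Lemma rank_Fk l G G' x : Fk l G -> Fk l G' -> In x G -> In x G' -> rank G x = rank G' x.
Proof.
  intros HG HG' Hx Hx'. unfold rank. apply Permutation_length, NoDup_Permutation.
  - apply NoDup_filter, StronglySorted_NoDup, (Fk_sorted l), HG.
  - apply NoDup_filter, StronglySorted_NoDup, (Fk_sorted l), HG'.
  - intros y. rewrite !filter_In, decide_true.
    split; intros [Hy [Hle| ->]]; split; try (right; reflexivity); try (left; exact Hle); auto.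
    + apply (Fk_inter_init l l G G' (le_n l) HG HG' y x); auto.
    + apply (Fk_inter_init l l G' G (le_n l) HG' HG y x); auto.
Qed.

Lemma type_root_lt l : 1 <= l -> rs l < m (l - 1).
Proof. intros H. destruct l as [|l]; [lia|]. replace (S l - 1) with l by lia. apply Htype. Qed.

Lemma Xi_eq_root l G R P x : Fk l G -> canon l G R P -> In x R -> Xi_eq T lt m ns rs F x l (-1)%Z.
Proof.
  intros HG HC Hx. split; [exists G; split; auto; eapply canon_root_in; eauto|].
  intros G' R' P' HG' HxG' HC'. destruct (classic (In x R')) as [h|h]; [left; auto|].
  exfalso. apply (canon_In l G' R' P' HC') in HxG' as HxP. destruct HxP as [i [Hi Hxi]].
  pose proof (rank_piece l G' R' P' HG' HC' i x Hi Hxi h).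
  pose proof (rank_root l G R P HG HC x Hx).
  rewrite (rank_Fk l G G' x HG HG') in *; auto; [lia|]. eapply canon_root_in; eauto.
Qed.

Lemma Xi_eq_piece l G R P i x : Fk l G -> canon l G R P -> i < ns l -> In x (P i) -> ~ In x R ->
  Xi_eq T lt m ns rs F x l (Z.of_nat i).
Proof.
  intros HG HC Hi Hx Hx'. assert (HxG : In x G) by (eapply canon_piece_in; eauto).
  split; [exists G; auto|].
  intros G' R' P' HG' HxG' HC'.
  pose proof (rank_piece l G R P HG HC i x Hi Hx Hx') as B.
  rewrite (rank_Fk l G G' x HG HG' HxG HxG') in B.
  pose proof (type_root_lt l (proj1 HC)).
  destruct (classic (In x R')) as [h|h].
  - exfalso. pose proof (rank_root l G' R' P' HG' HC' x h). lia.
  - right. apply (canon_In l G' R' P' HC') in HxG' as [i' [Hi' Hxi]].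
    exists i'. repeat split; auto. f_equal.
    pose proof (rank_piece l G' R' P' HG' HC' i' x Hi' Hxi h) as B'.
    set (K := m (l - 1) - rs l) in *.
    destruct (Nat.lt_total i i') as [c|[c|c]]; auto; exfalso.
    + assert (S i * K <= i' * K) by (apply Nat.mul_le_mono_r; lia). lia.
    + assert (S i' * K <= i * K) by (apply Nat.mul_le_mono_r; lia). lia.
Qed.

Lemma rtt_captured_of_pieces l G RG P nn Rs (D w : nat -> list T) :
  Fk l G -> canon l G RG P -> 2 <= nn -> nn <= ns l ->
  (forall i, i < nn -> D i = Rs ++ w i) ->
  (forall i, i < nn -> StronglySorted lt (D i)) ->
  (forall i, i < nn -> length (w i) = length (w 0)) ->
  (forall x, In x Rs -> In x RG) ->
  (forall i x, i < nn -> In x (w i) -> In x (P i) /\ ~ In x RG) ->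
  rtt_seq T lt nn D Rs /\ captured T lt m ns rs F nn D Rs l.
Proof.
  intros HG HC H2 Hnn HD Hs Hw HR Hwi.
  assert (Hsplit : forall i x, i < nn -> In x (D i) -> In x Rs \/ (In x (P i) /\ ~ In x RG)).
  { intros i x Hi Hx. rewrite HD in Hx by auto. apply in_app_or in Hx as [h|h]; auto. }
  split.
  - split; [auto|]. split; [|split; [|split; [|split]]].
    + assert (h := Hs 0 ltac:(lia)). rewrite HD in h by lia. apply StronglySorted_app_inv in h. tauto.
    + intros i Hi. split; auto. rewrite !HD by lia. rewrite !length_app, Hw by auto. auto.
    + intros i j Hi Hj Hij x. split.
      * intros [hi hj]. destruct (Hsplit i x Hi hi) as [h|[h1 h2]]; auto.
        destruct (Hsplit j x Hj hj) as [h'|[h1' h2']]; [tauto|].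
        exfalso. apply h2, (canon_inter l G RG P HC i j x); auto; lia.
      * intros h. rewrite !HD by auto. split; apply in_or_app; auto.
    + intros i Hi x y Hx Hy Hy'. destruct (Hsplit i y Hi Hy) as [h|[h1 h2]]; [tauto|].
      apply (canon_root_lt l G RG P HC i x y); auto. lia.
    + intros i j Hij Hj x y Hx Hx' Hy Hy'.
      destruct (Hsplit i x ltac:(lia) Hx) as [h|[h1 h2]]; [tauto|].
      destruct (Hsplit j y Hj Hy) as [h'|[h1' h2']]; [tauto|].
      apply (canon_tails_lt l G RG P HC i j x y); auto. lia.
  - split; [apply HC|]. split; auto. split.
    + intros i a x Hi Ha. rewrite HD in Ha by auto.
      destruct (Nat.ltb_spec a (length Rs)) as [c|c].
      * rewrite nth_error_app1 in Ha by auto. apply nth_error_In in Ha.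
        apply (Xi_eq_root l G RG P); auto.
      * rewrite nth_error_app2 in Ha by auto. apply nth_error_In in Ha.
        destruct (Hwi i x Hi Ha) as [h1 h2].
        apply (Xi_eq_piece l G RG P i); auto. lia.
    + intros i j a x y Hij Hj Ha Hx Hy. rewrite HD in Hx, Hy by lia.
      rewrite nth_error_app2 in Hx, Hy by auto. apply nth_error_In in Hx, Hy.
      destruct (Hwi i x ltac:(lia) Hx), (Hwi j y Hj Hy).
      apply (rho_eq_tails l G RG P HG HC i j); auto. lia.
Qed.

Section Traces.
Variable d0 : T.

Definition trace k (s : list T) : list bool :=
  map (fun x => decide (In x s)) (closure_list k (last s d0)).

Lemma select_trace k s G : StronglySorted lt s -> s <> [] -> Fk k G -> incl s G ->
  in_level k (last s d0) /\ s = select (trace k s) (closure_list k (last s d0)).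
Proof.
  intros Hs Hne HG HsG.
  assert (Hlast : in_level k (last s d0)) by (exists G; split; auto; apply HsG, last_In, Hne).
  split; auto. unfold trace. rewrite select_map_filter.
  destruct (closure_list_rep k _ Hlast) as [Hsort Hin].
  apply StronglySorted_ext; auto using StronglySorted_filter.
  intros x. rewrite filter_In, decide_true, Hin. split; [|tauto]. intros Hx. split; auto.
  apply (clos_Fk k G _ x HG); [apply HsG, last_In, Hne|].
  split; [apply StronglySorted_le_last|apply HsG]; auto.
Qed.

(* Two pigeonhole steps: uncountably many members lie in a set of one level [k] and have
   one trace [mu]; such a member is then determined by its maximum. *)
Lemma uniform_traces (S : list T -> Prop) :
  (forall L, S L -> StronglySorted lt L /\ L <> []) -> ~ countable S ->
  exists k mu (Top : T -> Prop), ~ countable Top /\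
    forall xi, Top xi -> in_level k xi /\ length (closure_list k xi) = length mu /\
      S (select mu (closure_list k xi)) /\ In xi (select mu (closure_list k xi)).
Proof.
  intros HS Hunc.
  set (level := fun s => epsilon (inhabits 0) (fun k => exists G, Fk k G /\ incl s G)).
  assert (Hlevel : forall s, S s -> exists G, Fk (level s) G /\ incl s G).
  { intros s Hs. apply (epsilon_spec (inhabits 0) (fun k => exists G, Fk k G /\ incl s G)).
    destruct (proj1 (proj2 HF) s) as [G [HG HsG]].
    destruct (proj1 HF G HG) as [_ [_ [k Hk]]]. exists k, G. repeat split; auto. }
  destruct (uncountable_fiber S level Hunc) as [k Hk].
  destruct (uncountable_fiber _ (fun s => bits_to_nat (trace k s)) Hk) as [c Hc].
  destruct (uncountable_inhabited _ Hc) as [s0 [[_ _] Hs0]].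
  set (S2 := fun s => (S s /\ level s = k) /\ bits_to_nat (trace k s) = c) in *.
  assert (HS2 : forall s, S2 s -> S s /\ trace k s = trace k s0 /\ in_level k (last s d0) /\
      s = select (trace k s) (closure_list k (last s d0))).
  { intros s [[Hs Hks] Htr]. split; [auto|]. split; [apply bits_to_nat_inj; congruence|].
    destruct (Hlevel s Hs) as [G [HG HsG]]. rewrite Hks in HG.
    apply (select_trace k s G); auto; apply HS, Hs. }
  exists k, (trace k s0), (fun xi => exists s, S2 s /\ xi = last s d0). split.
  - apply uncountable_image; auto. intros s s' Hs Hs' E.
    destruct (HS2 s Hs) as [_ [E1 [_ Es]]]. destruct (HS2 s' Hs') as [_ [E1' [_ Es']]].
    rewrite Es, Es', E1, E1', E. reflexivity.
  - intros xi [s [Hs ->]]. destruct (HS2 s Hs) as [HSs [Etr [Hlev Es]]].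
    rewrite <- Etr, <- Es. repeat split; auto.
    + unfold trace. rewrite length_map. reflexivity.
    + apply last_In, HS, HSs.
Qed.

(* The closures of the maxima form an uncountable family of sets of one size, to which the
   Delta-system lemma applies. *)
Lemma uniform_delta_traces (S : list T -> Prop) :
  (forall L, S L -> StronglySorted lt L /\ L <> []) -> ~ countable S ->
  exists k mu a0 R (Top : T -> Prop), ~ countable Top /\ a0 < length mu /\
    (forall xi, Top xi -> in_level k xi /\ length (closure_list k xi) = length mu /\
      S (select mu (closure_list k xi)) /\ In xi (select mu (closure_list k xi)) /\
      firstn a0 (closure_list k xi) = R) /\
    (forall xi xi', Top xi -> Top xi' -> xi <> xi' ->
      (forall x, In x (closure_list k xi) -> lt x (nth a0 (closure_list k xi') d0)) \/
      (forall x, In x (closure_list k xi') -> lt x (nth a0 (closure_list k xi) d0))).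
Proof.
  intros HS Hunc.
  destruct (uniform_traces S HS Hunc) as [k [mu [Top [Htop_unc Htop]]]].
  set (Fam := fun L => exists xi, Top xi /\ L = closure_list k xi).
  assert (HFam : forall L, Fam L -> StronglySorted lt L /\ length L = length mu).
  { intros L [xi [Hxi ->]]. destruct (Htop xi Hxi) as [Hlev [Hlen _]].
    split; [apply (closure_list_rep k xi Hlev)|exact Hlen]. }
  assert (HFam_unc : ~ countable Fam).
  { apply uncountable_image; auto. intros xi xi' Hxi Hxi'.
    apply closure_list_inj; [apply Htop, Hxi|apply Htop, Hxi']. }
  destruct (delta_system d0 Fam (length mu) HFam HFam_unc)
    as [a0 [R [Fam2 [Ha0 [_ [Hsub [Hunc2 [Hroot Hsep]]]]]]]].
  exists k, mu, a0, R, (fun xi => Top xi /\ Fam2 (closure_list k xi)).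
  split; [|split; [exact Ha0|split]].
  - intros Hc. apply Hunc2.
    refine (countable_sub _ _ _ (countable_image _ (closure_list k) Hc)).
    intros L HL. destruct (Hsub L HL) as [xi [Hxi ->]]. eauto.
  - intros xi [Hxi H2]. destruct (Htop xi Hxi) as [? [? [? ?]]]. repeat split; auto.
  - intros xi xi' [Hxi H2] [Hxi' H2'] Hne. apply Hsep; auto.
    intros E. apply Hne, (closure_list_inj k); auto; [apply Htop, Hxi|apply Htop, Hxi'].
Qed.

End Traces.

Section Capture.
Variable d0 : T.
Variable S : list T -> Prop.
Hypothesis HS : forall L, S L -> StronglySorted lt L /\ L <> [].
Variables (k : nat) (mu : list bool) (a0 : nat) (R : list T) (Top : T -> Prop).
Hypothesis Htop_unc : ~ countable Top.
Hypothesis Ha0 : a0 < length mu.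
Hypothesis Htop : forall xi, Top xi -> in_level k xi /\ length (closure_list k xi) = length mu /\
  S (select mu (closure_list k xi)) /\ In xi (select mu (closure_list k xi)) /\
  firstn a0 (closure_list k xi) = R.
Hypothesis Hsep : forall xi xi', Top xi -> Top xi' -> xi <> xi' ->
  (forall x, In x (closure_list k xi) -> lt x (nth a0 (closure_list k xi') d0)) \/
  (forall x, In x (closure_list k xi') -> lt x (nth a0 (closure_list k xi) d0)).

Local Notation L := (closure_list k).
Local Notation tail xi := (skipn a0 (L xi)).

Lemma top_split xi : Top xi -> L xi = R ++ tail xi.
Proof. intros H. rewrite <- (proj2 (proj2 (proj2 (proj2 (Htop xi H))))). symmetry. apply firstn_skipn. Qed.

Lemma top_sorted xi : Top xi -> StronglySorted lt (L xi).
Proof. intros H. apply (closure_list_rep k xi), Htop, H. Qed.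

Lemma top_root_length xi : Top xi -> length R = a0.
Proof.
  intros H. rewrite <- (proj2 (proj2 (proj2 (proj2 (Htop xi H))))), length_firstn.
  rewrite (proj1 (proj2 (Htop xi H))). lia.
Qed.

Lemma top_sorted_app xi : Top xi -> StronglySorted lt R /\ StronglySorted lt (tail xi) /\
  (forall x y, In x R -> In y (tail xi) -> lt x y).
Proof.
  intros H. pose proof (top_sorted xi H) as Hs. rewrite (top_split xi H) in Hs.
  apply StronglySorted_app_inv, Hs.
Qed.

Lemma top_root_lt_tail xi x y : Top xi -> In x R -> In y (tail xi) -> lt x y.
Proof. intros H. apply (top_sorted_app xi H). Qed.

Lemma top_tail_nonempty xi : Top xi -> tail xi <> [].
Proof.
  intros H E. pose proof (length_skipn a0 (L xi)) as Hl.
  rewrite E, (proj1 (proj2 (Htop xi H))) in Hl. simpl in Hl. lia.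
Qed.

Lemma top_tail_not_root xi x : Top xi -> In x (tail xi) -> ~ In x R.
Proof. intros H Hx HR. exact (ord_lt_irrefl x (top_root_lt_tail xi x x H HR Hx)). Qed.

Lemma top_tail_ge xi y : Top xi -> In y (tail xi) -> le T lt (nth a0 (L xi) d0) y.
Proof.
  intros H Hy. apply StronglySorted_nth_le_skipn; auto using top_sorted.
  rewrite (proj1 (proj2 (Htop xi H))). exact Ha0.
Qed.

Lemma top_In xi x : Top xi -> In x (L xi) <-> In x R \/ In x (tail xi).
Proof. intros H. rewrite (top_split xi H) at 1. apply in_app_iff. Qed.

Lemma top_tail_lt xi xi' : Top xi -> Top xi' -> xi <> xi' ->
  tail_lt T lt (L xi) (L xi') R \/ tail_lt T lt (L xi') (L xi) R.
Proof.
  intros H H' Hne.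
  destruct (Hsep xi xi' H H' Hne) as [A|A]; [left|right]; intros x y Hx _ Hy Hy';
    [apply (top_In xi' y H') in Hy | apply (top_In xi y H) in Hy];
    destruct Hy as [h|h]; try tauto; eapply ord_lt_le_trans; eauto using top_tail_ge.
Qed.

Lemma top_rtt_fam (Phi : list T -> Prop) : (forall M, Phi M -> exists xi, Top xi /\ M = L xi) ->
  (exists M1 M2, Phi M1 /\ Phi M2 /\ M1 <> M2) -> rtt_fam T lt Phi R.
Proof.
  intros Hsub Htwo. split; [exact Htwo|]. split; [|split; [|split; [|split; [|split]]]].
  - destruct Htwo as [M [_ [HM _]]]. destruct (Hsub M HM) as [xi [Hxi _]].
    apply (top_sorted_app xi Hxi).
  - intros M HM. destruct (Hsub M HM) as [xi [Hxi ->]]. apply top_sorted, Hxi.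
  - intros M M' HM HM'. destruct (Hsub M HM) as [xi [Hxi ->]]. destruct (Hsub M' HM') as [xi' [Hxi' ->]].
    rewrite (proj1 (proj2 (Htop xi Hxi))), (proj1 (proj2 (Htop xi' Hxi'))). reflexivity.
  - intros M M' HM HM' Hne x.
    destruct (Hsub M HM) as [xi [Hxi ->]]. destruct (Hsub M' HM') as [xi' [Hxi' ->]].
    rewrite (top_In xi x Hxi), (top_In xi' x Hxi'). split; [|tauto].
    assert (Hne' : xi <> xi') by congruence.
    intros [[h|h] [h'|h']]; auto. exfalso.
    destruct (top_tail_lt xi xi' Hxi Hxi' Hne') as [A|A].
    + apply (ord_lt_irrefl x), A; try apply (top_In _ x); eauto using top_tail_not_root.
    + apply (ord_lt_irrefl x), A; try apply (top_In _ x); eauto using top_tail_not_root.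
  - intros M HM x y Hx Hy Hy'. destruct (Hsub M HM) as [xi [Hxi ->]].
    apply (top_In xi y Hxi) in Hy as [h|h]; [tauto|]. eapply top_root_lt_tail; eauto.
  - intros M M' HM HM' Hne.
    destruct (Hsub M HM) as [xi [Hxi ->]]. destruct (Hsub M' HM') as [xi' [Hxi' ->]].
    apply top_tail_lt; auto. congruence.
Qed.

Lemma top_above b : exists beta, Top beta /\ lt b (nth a0 (L beta) d0).
Proof.
  assert (Hunc : ~ countable (fun v => exists xi, Top xi /\ v = nth a0 (L xi) d0)).
  { apply uncountable_image; auto. intros xi xi' Hxi Hxi' E. apply NNPP. intros Hne.
    assert (Hin : forall z, Top z -> In (nth a0 (L z) d0) (L z)).
    { intros z Hz. apply nth_In. rewrite (proj1 (proj2 (Htop z Hz))). exact Ha0. }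
    destruct (Hsep xi xi' Hxi Hxi' Hne) as [A|A]; apply (ord_lt_irrefl (nth a0 (L xi) d0));
      [rewrite E at 2|rewrite E at 1]; apply A, Hin; auto. }
  destruct (uncountable_unbounded _ Hunc b) as [v [[beta [Hbeta ->]] Hb]]. eauto.
Qed.

Lemma tops_capture nn l G RG P (xi : nat -> T) :
  Fk l G -> canon l G RG P -> 2 <= nn -> nn <= ns l ->
  (forall i, i < nn -> Top (xi i)) ->
  (forall i j, i < nn -> j < nn -> xi i = xi j -> i = j) ->
  (forall x, In x R -> In x RG) ->
  (forall i x, i < nn -> In x (tail (xi i)) -> In x (P i) /\ ~ In x RG) ->
  exists (D : nat -> list T) Rs, (forall i, i < nn -> S (D i)) /\
    (forall i j, i < nn -> j < nn -> i <> j -> D i <> D j) /\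
    rtt_seq T lt nn D Rs /\ captured T lt m ns rs F nn D Rs l.
Proof.
  intros HG HC H2 Hnn Htops Hinj HR Htails.
  set (w := fun i => select (skipn a0 mu) (tail (xi i))).
  assert (Hlen : forall i, i < nn -> length (skipn a0 mu) = length (tail (xi i))).
  { intros i Hi. rewrite !length_skipn, (proj1 (proj2 (Htop _ (Htops i Hi)))). reflexivity. }
  assert (Hsplit : forall i, i < nn -> select mu (L (xi i)) = select (firstn a0 mu) R ++ w i).
  { intros i Hi. rewrite (top_split _ (Htops i Hi)) at 1. rewrite <- (firstn_skipn a0 mu) at 1.
    apply select_app. rewrite length_firstn, (top_root_length _ (Htops i Hi)). lia. }
  exists (fun i => select mu (L (xi i))), (select (firstn a0 mu) R).
  split; [|split].
  - intros i Hi. apply Htop, Htops, Hi.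
  - intros i j Hi Hj Hij E. apply Hij, Hinj; auto.
    assert (Hself : forall a b, a < nn -> b < nn -> select mu (L (xi a)) = select mu (L (xi b)) ->
      le T lt (xi a) (xi b)).
    { intros a b Ha Hb Eab. apply (closure_list_le k); [apply Htop, Htops, Hb|].
      apply (select_incl mu). rewrite <- Eab. apply Htop, Htops, Ha. }
    apply ord_le_antisym; auto.
  - apply (rtt_captured_of_pieces l G RG P nn _ _ w HG HC H2 Hnn Hsplit).
    + intros i Hi. apply HS, Htop, Htops, Hi.
    + intros i Hi. unfold w. rewrite !select_length by (apply Hlen; lia). reflexivity.
    + intros x Hx. apply HR, (select_incl _ _ _ Hx).
    + intros i x Hi Hx. apply Htails; auto. apply (select_incl _ _ _ Hx).
Qed.

Section Induction.
Variable C : T -> T -> Prop.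
Hypothesis HC : clubsuit T lt C.
Variable n : nat.
Hypothesis Hn : 1 <= n.
Hypothesis HIH : IH_rho T lt m ns rs F C n.

Lemma Cn_rtt_fam delta : LimN T lt C n delta -> (forall xi, Cn T C n delta xi -> Top xi) ->
  rtt_fam T lt (fun M => exists xi, Cn T C n delta xi /\ rep T lt M (clos xi k)) R.
Proof.
  intros Hdelta Hguess.
  assert (Hlev : forall xi, Cn T C n delta xi -> in_level k xi) by (intros; apply Htop, Hguess; auto).
  apply top_rtt_fam.
  - intros M [xi [Hxi HM]]. exists xi. split; auto.
    exact (rep_unique _ _ _ HM (closure_list_rep k xi (Hlev xi Hxi))).
  - destruct (Cn_two_lt C HC n delta Hdelta) as [x [y [Hx [Hy Hxy]]]].
    exists (L x), (L y). split; [exists x; split; auto; apply closure_list_rep, Hlev, Hx|].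
    split; [exists y; split; auto; apply closure_list_rep, Hlev, Hy|]. intros E.
    apply (ord_le_not_lt y x); auto. apply (closure_list_le k x y (Hlev x Hx)).
    rewrite E. apply closure_list_self, Hlev, Hy.
Qed.

Lemma capture_above delta beta N : LimN T lt C n delta -> (forall xi, Cn T C n delta xi -> Top xi) ->
  Top beta -> lt delta (nth a0 (L beta) d0) ->
  exists l, N <= l /\ exists (D : nat -> list T) Rs, (forall i, i < n + 1 -> S (D i)) /\
    (forall i j, i < n + 1 -> j < n + 1 -> i <> j -> D i <> D j) /\
    rtt_seq T lt (n + 1) D Rs /\ captured T lt m ns rs F (n + 1) D Rs l.
Proof.
  intros Hdelta Hguess Hbeta Hdb.
  assert (Hrep : forall xi, Cn T C n delta xi -> rep T lt (L xi) (clos xi k))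
    by (intros xi Hxi; apply closure_list_rep, Htop, Hguess, Hxi).
  assert (Hfam := Cn_rtt_fam delta Hdelta Hguess).
  assert (Htail_above : forall x, In x (tail beta) -> ~ lt x delta).
  { intros x Hx Hxd. apply (ord_lt_asym x delta Hxd).
    apply (ord_lt_le_trans _ _ _ Hdb), top_tail_ge; auto. }
  destruct (HIH delta k (tail beta) R Hdelta (fun xi Hxi => ex_intro (fun M => rep T lt M _) _ (Hrep xi Hxi)) Hfam
              (proj1 (proj2 (top_sorted_app beta Hbeta))) (top_tail_nonempty beta Hbeta)
              Htail_above N)
    as [l [HNl [_ [Hnl [G [RG [P [D [HG [HCG [HDs [HDl [HDC [HA HDi]]]]]]]]]]]]]].
  exists l. split; [exact HNl|].
  set (xi := fun i => if i <? n then nth i D d0 else beta).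
  assert (HxiD : forall i, i < n -> Cn T C n delta (xi i) /\ nth_error D i = Some (xi i)).
  { intros i Hi. unfold xi. rewrite (proj2 (Nat.ltb_lt i n) Hi).
    split; [apply HDC, nth_In; lia|apply nth_error_nth'; lia]. }
  assert (Hxi_lt : forall i, i < n -> lt (xi i) beta).
  { intros i Hi. apply (ord_lt_trans _ delta); [apply (Cn_lt C HC n delta); auto; apply HxiD, Hi|].
    apply (ord_lt_le_trans _ _ _ Hdb), (closure_list_le k); [apply Htop, Hbeta|].
    apply nth_In. rewrite (proj1 (proj2 (Htop beta Hbeta))). exact Ha0. }
  assert (Hxi_n : xi n = beta) by (unfold xi; rewrite Nat.ltb_irrefl; reflexivity).
  apply (tops_capture (n + 1) l G RG P xi); auto; try lia.
  - intros i Hi. destruct (Nat.eq_dec i n) as [->|]; [rewrite Hxi_n; exact Hbeta|].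
    apply Hguess, HxiD. lia.
  - intros i j Hi Hj E.
    destruct (Nat.eq_dec i n) as [->|Hin]; destruct (Nat.eq_dec j n) as [->|Hjn]; auto.
    + rewrite Hxi_n in E. destruct (ord_lt_irrefl beta). rewrite E at 1. apply Hxi_lt. lia.
    + rewrite Hxi_n in E. destruct (ord_lt_irrefl beta). rewrite <- E at 1. apply Hxi_lt. lia.
    + apply (proj1 (NoDup_nth D d0) (StronglySorted_NoDup D HDs)); try lia.
      unfold xi in E. rewrite (proj2 (Nat.ltb_lt i n)), (proj2 (Nat.ltb_lt j n)) in E by lia.
      exact E.
  - intros x Hx. destruct (HxiD 0 Hn) as [_ E]. exact (proj2 (proj2 (proj2 (HDi 0 _ Hn E) x) Hx)).
  - intros i x Hi Hx. destruct (Nat.eq_dec i n) as [->|Hin].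
    + rewrite Hxi_n in Hx. apply HA, Hx.
    + destruct (HxiD i ltac:(lia)) as [Hc E]. destruct (HDi i _ ltac:(lia) E) as [HP HRG].
      assert (Hcl : clos (xi i) k x) by (apply (Hrep _ Hc), (in_skipn _ a0), Hx).
      split; [apply HP, Hcl|]. intros h.
      apply (top_tail_not_root (xi i) x (Hguess _ Hc) Hx), HRG. auto.
Qed.

End Induction.
End Capture.
End Scheme.
End Omega1.

Theorem mainTheorem18 (T : Type) (lt : T -> T -> Prop) (HT : is_omega1 T lt)
  (C : T -> T -> Prop) (HC : clubsuit T lt C)
  (n : nat) (Hn : 1 <= n)
  (m ns rs : nat -> nat) (Htype : good_type m ns rs)
  (F : list T -> Prop) (HF : scheme T lt m ns rs F)
  (HIH : IH_rho T lt m ns rs F C n) :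
  rho_capturing T lt m ns rs F (n + 1).
Proof.
  intros S HS Hunc N. change (~ countable S) in Hunc.
  destruct (uncountable_inhabited S Hunc) as [[|d0 s0] Hs0]; [destruct (proj2 (HS _ Hs0)); auto|].
  destruct (uniform_delta_traces T lt HT m ns rs F HF d0 S HS Hunc)
    as [k [mu [a0 [R [Top [Htop_unc [Ha0 [Htop Hsep]]]]]]]].
  destruct (uncountable_inhabited _ (LimN_Cn_sub_uncountable T lt HT C HC n Top Htop_unc))
    as [delta [Hdelta Hguess]].
  destruct (top_above T lt HT m F d0 S k mu a0 R Top Htop_unc Ha0 Htop Hsep delta)
    as [beta [Hbeta Hdb]].
  exact (capture_above T lt HT m ns rs F (proj1 Htype) HF d0 S HS k mu a0 R Top Ha0 Htop Hsep
           C HC n Hn HIH delta beta N Hdelta Hguess Hbeta Hdb).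
Qed.
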